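(* Let $\mathsf{V}$ be a congruence distributive variety of $\mathcal{L}$-algebras that has the compact intersection property. For every finite set of variables $\overline{x}$ and conjunctions of equations $\varphi_1(\overline{x}),\varphi_2(\overline{x})$, there exists a conjunction of equations $\pi(\overline{x})$ such that for every finite set of variables $\overline{y}$ and every equation $\varepsilon(\overline{x},\overline{y})$, \[\mathsf{V}\models(\varphi_1\curlyvee\varphi_2)\to\varepsilon\iff\mathsf{V}\models\pi\to\varepsilon.\]
   Context: $\mathcal{L}$ is an algebraic first-order language with at least one constant symbol; $\curlyvee$ denotes disjunction. $\mathsf{V}\models\alpha$ means all members of $\mathsf{V}$ satisfy $\alpha$ under all assignments. $\mathsf{V}$ has the compact intersection property if for every $\mathbf{A}\in\mathsf{V}$, the intersection of any two compact (finitely generated) congruences of $\mathbf{A}$ is compact. *)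

From Stdlib Require Import List.
From Stdlib Require Fin.
Import ListNotations.

Record language := {
  op : Type;
  arity : op -> nat
}.

Definition has_constant (L : language) : Prop :=
  exists c : op L, arity L c = 0.

Record algebra (L : language) := {
  carrier :> Type;
  interp : forall f : op L, (Fin.t (arity L f) -> carrier) -> carrier
}.
Arguments interp {L} _ f args.

Inductive term (L : language) (X : Type) : Type :=
| var : X -> term L X
| app : forall f : op L, (Fin.t (arity L f) -> term L X) -> term L X.
Arguments var {L X} x.
Arguments app {L X} f args.

Fixpoint eval {L : language} {X : Type} (A : algebra L) (s : X -> A)
  (t : term L X) : A :=
  match t with
  | var x => s x
  | app f args => interp A f (fun i => eval A s (args i))
  end.

Definition equation (L : language) (X : Type) : Type := (term L X * term L X)%type.
Definition conj_eqs (L : language) (X : Type) : Type := list (equation L X).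

Definition sat_eq {L : language} {X : Type} (A : algebra L) (s : X -> A)
  (e : equation L X) : Prop := eval A s (fst e) = eval A s (snd e).

Definition sat_conj {L : language} {X : Type} (A : algebra L) (s : X -> A)
  (phi : conj_eqs L X) : Prop := forall e, In e phi -> sat_eq A s e.

Definition is_hom {L : language} (A B : algebra L) (h : A -> B) : Prop :=
  forall (f : op L) (args : Fin.t (arity L f) -> A),
    h (interp A f args) = interp B f (fun i => h (args i)).

Definition prod_alg {L : language} (I : Type) (F : I -> algebra L) : algebra L :=
  {| carrier := forall i : I, F i;
     interp := fun f args => fun i => interp (F i) f (fun j => args j i) |}.

Definition is_variety {L : language} (V : algebra L -> Prop) : Prop :=
  (forall (A B : algebra L) (h : A -> B),
      V A -> is_hom A B h -> (forall b : B, exists a : A, h a = b) -> V B) /\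
  (* closed under subalgebras (up to isomorphism: injective homomorphisms) *)
  (forall (A B : algebra L) (h : B -> A),
      V A -> is_hom B A h -> (forall x y : B, h x = h y -> x = y) -> V B) /\
  (forall (I : Type) (F : I -> algebra L),
      (forall i, V (F i)) -> V (prod_alg I F)).

Definition rel (A : Type) : Type := A -> A -> Prop.

Definition is_congruence {L : language} (A : algebra L) (theta : rel A) : Prop :=
  (forall a, theta a a) /\
  (forall a b, theta a b -> theta b a) /\
  (forall a b c, theta a b -> theta b c -> theta a c) /\
  (forall (f : op L) (args1 args2 : Fin.t (arity L f) -> A),
      (forall i, theta (args1 i) (args2 i)) ->
      theta (interp A f args1) (interp A f args2)).

Definition rel_eq {A : Type} (r1 r2 : rel A) : Prop :=
  forall a b, r1 a b <-> r2 a b.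

Definition Cg {L : language} (A : algebra L) (R : rel A) : rel A :=
  fun a b => forall theta : rel A,
    is_congruence A theta -> (forall x y, R x y -> theta x y) -> theta a b.

Definition cmeet {A : Type} (r1 r2 : rel A) : rel A := fun a b => r1 a b /\ r2 a b.

Definition cjoin {L : language} (A : algebra L) (r1 r2 : rel A) : rel A :=
  Cg A (fun a b => r1 a b \/ r2 a b).

Definition congruence_distributive_alg {L : language} (A : algebra L) : Prop :=
  forall theta phi psi : rel A,
    is_congruence A theta -> is_congruence A phi -> is_congruence A psi ->
    rel_eq (cmeet theta (cjoin A phi psi))
           (cjoin A (cmeet theta phi) (cmeet theta psi)).

Definition congruence_distributive {L : language} (V : algebra L -> Prop) : Prop :=
  forall A, V A -> congruence_distributive_alg A.

Definition compact_congruence {L : language} (A : algebra L) (theta : rel A) : Prop :=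
  exists l : list (A * A),
    rel_eq theta (Cg A (fun a b => In (a, b) l)).

Definition compact_intersection_property {L : language} (V : algebra L -> Prop) : Prop :=
  forall A, V A -> forall theta psi : rel A,
    compact_congruence A theta -> compact_congruence A psi ->
    compact_congruence A (cmeet theta psi).

(* V |= (phi1 \/ phi2) -> eps, where phi1, phi2 are in the variables xbar
   (Fin.t n) and eps is in the variables xbar, ybar (Fin.t n + Fin.t m). *)
Definition models_disj_imp {L : language} (V : algebra L -> Prop) {n m : nat}
  (phi1 phi2 : conj_eqs L (Fin.t n)) (eps : equation L (Fin.t n + Fin.t m)) : Prop :=
  forall A, V A -> forall s : (Fin.t n + Fin.t m) -> A,
    (sat_conj A (fun x => s (inl x)) phi1 \/ sat_conj A (fun x => s (inl x)) phi2) ->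
    sat_eq A s eps.

Definition models_imp {L : language} (V : algebra L -> Prop) {n m : nat}
  (pi : conj_eqs L (Fin.t n)) (eps : equation L (Fin.t n + Fin.t m)) : Prop :=
  forall A, V A -> forall s : (Fin.t n + Fin.t m) -> A,
    sat_conj A (fun x => s (inl x)) pi -> sat_eq A s eps.

(* In the free algebra of V on the variables x̄ together with countably many
   further variables z_0, z_1, ..., a conjunction γ implies an equation ε in V
   exactly when ε lies in the congruence generated by γ.  So the consequences
   of φ1 ∨ φ2 correspond to the meet Cg(φ1) ∩ Cg(φ2), which by the compact
   intersection property is generated by a finite conjunction γ0.  Only finitely
   many z_k occur in γ0: moving ȳ past them and then replacing every z_k by a
   constant turns γ0 into π. *)

From Stdlib Require Import List Arith Lia.
From Stdlib Require Import ClassicalEpsilon FunctionalExtensionality.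
From Stdlib Require Import PropExtensionality ProofIrrelevance.
From Stdlib Require Fin.
Import ListNotations.

Section Terms.
Context {L : language}.

Fixpoint subst {X Y : Type} (σ : X -> term L Y) (t : term L X) : term L Y :=
  match t with
  | var x => σ x
  | app f args => app f (fun i => subst σ (args i))
  end.

Definition subst_eq {X Y : Type} (σ : X -> term L Y) (e : equation L X) : equation L Y :=
  (subst σ (fst e), subst σ (snd e)).

Lemma eval_subst {X Y : Type} (A : algebra L) (a : Y -> A) (σ : X -> term L Y)
  (t : term L X) :
  eval A a (subst σ t) = eval A (fun x => eval A a (σ x)) t.
Proof.
  induction t as [x | f args IH]; simpl; [reflexivity |].
  f_equal; apply functional_extensionality; exact IH.
Qed.

Lemma sat_eq_subst {X Y : Type} (A : algebra L) (a : Y -> A) (σ : X -> term L Y)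
  (e : equation L X) :
  sat_eq A a (subst_eq σ e) <-> sat_eq A (fun x => eval A a (σ x)) e.
Proof. unfold sat_eq, subst_eq; simpl; rewrite !eval_subst; reflexivity. Qed.

Lemma sat_conj_subst {X Y : Type} (A : algebra L) (a : Y -> A) (σ : X -> term L Y)
  (G : conj_eqs L X) :
  sat_conj A a (map (subst_eq σ) G) <-> sat_conj A (fun x => eval A a (σ x)) G.
Proof.
  split.
  - intros H e He; apply sat_eq_subst, H, in_map, He.
  - intros H e' He'; apply in_map_iff in He' as (e & <- & He).
    apply sat_eq_subst, H, He.
Qed.

Lemma eval_hom {X : Type} (A B : algebra L) (h : A -> B) (a : X -> A) (t : term L X) :
  is_hom A B h -> h (eval A a t) = eval B (fun x => h (a x)) t.
Proof.
  intros Hh; induction t as [x | f args IH]; simpl; [reflexivity |].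
  rewrite Hh; f_equal; apply functional_extensionality; exact IH.
Qed.

End Terms.

Section Congruences.
Context {L : language} (A : algebra L).

Lemma Cg_is_congruence (R : rel A) : is_congruence A (Cg A R).
Proof.
  repeat split.
  - intros a θ (Hrefl & _) _; apply Hrefl.
  - intros a b H θ Hθ HR; apply Hθ, H; assumption.
  - intros a b c Hab Hbc θ Hθ HR; apply (proj1 (proj2 (proj2 Hθ))) with b;
      [apply Hab | apply Hbc]; assumption.
  - intros f args1 args2 H θ Hθ HR; apply Hθ; intros i; apply H; assumption.
Qed.

Lemma Cg_incl (R : rel A) (a b : A) : R a b -> Cg A R a b.
Proof. intros H θ _ HR; apply HR, H. Qed.

Lemma Cg_ext (R R' : rel A) :
  (forall a b, R a b <-> R' a b) -> rel_eq (Cg A R) (Cg A R').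
Proof.
  intros HRR' a b; split; intros H θ Hθ HR; apply H; trivial;
    intros x y Hxy; apply HR, HRR', Hxy.
Qed.

Lemma kernel_is_congruence (B : algebra L) (h : A -> B) :
  is_hom A B h -> is_congruence A (fun a b => h a = h b).
Proof.
  intros Hh; repeat split; try congruence.
  intros f args1 args2 H; rewrite !Hh; f_equal; apply functional_extensionality; exact H.
Qed.

End Congruences.

Section Quotient.
Context {L : language} (B : algebra L) (θ : rel B) (Hθ : is_congruence B θ).

Definition quot_carrier : Type := {P : B -> Prop | exists b, P = θ b}.

Definition quot_proj (b : B) : quot_carrier := exist _ (θ b) (ex_intro _ b eq_refl).

Definition quot_rep (P : quot_carrier) : B :=
  proj1_sig (constructive_indefinite_description _ (proj2_sig P)).

Definition quot_alg : algebra L :=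
  {| carrier := quot_carrier;
     interp := fun f args => quot_proj (interp B f (fun j => quot_rep (args j))) |}.

Lemma quot_proj_rep (P : quot_carrier) : quot_proj (quot_rep P) = P.
Proof.
  destruct P as [P HP]; unfold quot_rep; simpl.
  destruct (constructive_indefinite_description _ HP) as [b ->]; simpl.
  apply subset_eq_compat; reflexivity.
Qed.

Lemma quot_proj_eq (a b : B) : quot_proj a = quot_proj b <-> θ a b.
Proof.
  destruct Hθ as (Hrefl & Hsym & Htrans & _); split.
  - intros H; apply (f_equal (@proj1_sig _ _)) in H; simpl in H.
    rewrite H; apply Hrefl.
  - intros Hab; apply subset_eq_compat, functional_extensionality; intros c.
    apply propositional_extensionality; split; eauto.
Qed.

Lemma quot_proj_hom : is_hom B quot_alg quot_proj.
Proof.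
  intros f args; simpl; apply quot_proj_eq, Hθ; intros j.
  apply quot_proj_eq; symmetry; apply quot_proj_rep.
Qed.

End Quotient.

Lemma variety_quotient {L : language} (V : algebra L -> Prop) (HV : is_variety V)
  (B : algebra L) (θ : rel B) :
  V B -> is_congruence B θ ->
  exists (Q : algebra L) (q : B -> Q),
    V Q /\ is_hom B Q q /\ forall a b, q a = q b <-> θ a b.
Proof.
  intros HB Hθ; exists (quot_alg B θ), (quot_proj B θ).
  pose proof (quot_proj_hom B θ Hθ) as Hq.
  repeat split; [| exact Hq | apply quot_proj_eq; exact Hθ ..].
  apply (proj1 HV) with B (quot_proj B θ); trivial.
  intros P; exists (quot_rep B θ P); apply quot_proj_rep.
Qed.

Section GeneratedSubalgebra.
Context {L : language} {X : Type} (B : algebra L) (g : X -> B).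

Definition gen_carrier : Type := {p : B | exists t, p = eval B g t}.

Lemma gen_closed (f : op L) (args : Fin.t (arity L f) -> gen_carrier) :
  exists t, interp B f (fun j => proj1_sig (args j)) = eval B g t.
Proof.
  destruct (choice (fun j t => proj1_sig (args j) = eval B g t)) as [ts Hts].
  { intros j; exact (proj2_sig (args j)). }
  exists (app f ts); simpl; f_equal; apply functional_extensionality; exact Hts.
Qed.

Definition gen_alg : algebra L :=
  {| carrier := gen_carrier; interp := fun f args => exist _ _ (gen_closed f args) |}.

Definition gen_var (x : X) : gen_alg := exist _ (g x) (ex_intro _ (var x) eq_refl).

Lemma gen_eval (t : term L X) : proj1_sig (eval gen_alg gen_var t) = eval B g t.
Proof.
  induction t as [x | f args IH]; simpl; [reflexivity |].
  f_equal; apply functional_extensionality; exact IH.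
Qed.

End GeneratedSubalgebra.

Definition V_identity {L : language} {X : Type} (V : algebra L -> Prop)
  (s t : term L X) : Prop :=
  forall A, V A -> forall a : X -> A, eval A a s = eval A a t.

Definition V_implies {L : language} {X : Type} (V : algebra L -> Prop)
  (G : conj_eqs L X) (e : equation L X) : Prop :=
  forall A, V A -> forall a : X -> A, sat_conj A a G -> sat_eq A a e.

Definition is_free_algebra {L : language} {X : Type} (V : algebra L -> Prop)
  (F : algebra L) (g : X -> F) : Prop :=
  V F /\
  (forall s t, eval F g s = eval F g t -> V_identity V s t) /\
  (forall p : F, exists t, p = eval F g t).

Lemma V_implies_instance {L : language} {X Y : Type} (V : algebra L -> Prop)
  (G : conj_eqs L X) (e : equation L X) (σ : X -> term L Y) (A : algebra L) (b : Y -> A) :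
  V_implies V G e -> V A ->
  sat_conj A (fun x => eval A b (σ x)) G -> sat_eq A b (subst_eq σ e).
Proof. intros Himp HA HG; apply sat_eq_subst, Himp; assumption. Qed.

Section FreeAlgebra.
Context {L : language} (V : algebra L -> Prop) (HV : is_variety V).

(* A product of one counterexample for each non-identity of V. *)
Lemma variety_separating_algebra (X : Type) :
  exists (P : algebra L) (g : X -> P),
    V P /\ forall s t, eval P g s = eval P g t -> V_identity V s t.
Proof.
  set (I := {st : term L X * term L X | ~ V_identity V (fst st) (snd st)}).
  assert (Hwitness : forall i : I, exists W : {A : algebra L & X -> A},
    V (projT1 W) /\
    eval (projT1 W) (projT2 W) (fst (proj1_sig i)) <>
    eval (projT1 W) (projT2 W) (snd (proj1_sig i))).
  { intros [[s t] Hst]; simpl; apply NNPP; intros Hno; apply Hst.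
    intros A HA a; apply NNPP; intros Hne; apply Hno.
    exists (existT _ A a); auto. }
  destruct (choice _ Hwitness) as [W HW].
  set (P := prod_alg I (fun i => projT1 (W i))).
  set (g := (fun x i => projT2 (W i) x) : X -> P).
  assert (Heval : forall t, eval P g t = fun i => eval (projT1 (W i)) (projT2 (W i)) t).
  { induction t as [x | f args IH]; [reflexivity |].
    apply functional_extensionality_dep; intros i; simpl; f_equal.
    apply functional_extensionality; intros j; rewrite IH; reflexivity. }
  exists P, g; split.
  - apply (proj2 (proj2 HV)); intros i; apply HW.
  - intros s t Hst; apply NNPP; intros Hn.
    apply (proj2 (HW (exist _ (s, t) Hn))); simpl.
    rewrite !Heval in Hst; exact (f_equal (fun p => p (exist _ (s, t) Hn)) Hst).
Qed.

Lemma variety_free_algebra (X : Type) :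
  exists (F : algebra L) (g : X -> F), is_free_algebra V F g.
Proof.
  destruct (variety_separating_algebra X) as (P & g & HP & Hsep).
  exists (gen_alg P g), (gen_var P g); repeat split.
  - apply (proj1 (proj2 HV)) with P (@proj1_sig _ _); trivial.
    + intros f args; reflexivity.
    + intros [x Hx] [y Hy]; simpl; apply subset_eq_compat.
  - intros s t Hst; apply Hsep.
    rewrite <- (gen_eval P g s), <- (gen_eval P g t), Hst; reflexivity.
  - intros [p [t Ht]]; exists t.
    pose proof (gen_eval P g t) as Heval.
    destruct (eval (gen_alg P g) (gen_var P g) t) as [q Hq]; simpl in Heval.
    apply subset_eq_compat; congruence.
Qed.

Context {X : Type} (F : algebra L) (g : X -> F) (HF : is_free_algebra V F g).

Definition eqs_rel (G : conj_eqs L X) : rel F :=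
  fun p q => exists e, In e G /\ p = eval F g (fst e) /\ q = eval F g (snd e).

Lemma free_lift (A : algebra L) (a : X -> A) :
  V A -> exists h : F -> A, is_hom F A h /\ forall t, h (eval F g t) = eval A a t.
Proof.
  destruct HF as (_ & Hfree & Hgen); intros HA.
  destruct (choice _ Hgen) as [rep Hrep].
  assert (Hwd : forall t, eval A a (rep (eval F g t)) = eval A a t).
  { intros t; apply Hfree; trivial; symmetry; apply Hrep. }
  exists (fun p => eval A a (rep p)); split; [| exact Hwd].
  intros f args.
  destruct (choice (fun j t => args j = eval F g t)) as [ts Hts]; [intros j; apply Hgen |].
  replace (interp F f args) with (eval F g (app f ts))
    by (simpl; f_equal; symmetry; apply functional_extensionality, Hts).
  rewrite Hwd; simpl; f_equal; apply functional_extensionality; intros j.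
  rewrite Hts, Hwd; reflexivity.
Qed.

Lemma Cg_eqs_iff_V_implies (G : conj_eqs L X) (e : equation L X) :
  Cg F (eqs_rel G) (eval F g (fst e)) (eval F g (snd e)) <-> V_implies V G e.
Proof.
  split.
  - intros HCg A HA a HG.
    destruct (free_lift A a HA) as (h & Hh & Hheval).
    unfold sat_eq; rewrite <- !Hheval.
    apply (HCg _ (kernel_is_congruence F A h Hh)).
    intros p q (e0 & He0 & -> & ->); rewrite !Hheval; apply HG, He0.
  - intros Himp.
    destruct (variety_quotient V HV F _ (proj1 HF) (Cg_is_congruence F (eqs_rel G)))
      as (Q & q & HQ & Hq & Hker).
    apply Hker; rewrite !(eval_hom F Q q g) by exact Hq.
    apply (Himp Q HQ); intros e0 He0; unfold sat_eq.
    rewrite <- !eval_hom by exact Hq; apply Hker, Cg_incl; exists e0; auto.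
Qed.

Lemma eqs_compact (G : conj_eqs L X) : compact_congruence F (Cg F (eqs_rel G)).
Proof.
  exists (map (fun e => (eval F g (fst e), eval F g (snd e))) G).
  apply Cg_ext; intros p q; rewrite in_map_iff; split.
  - intros (e & He & -> & ->); exists e; auto.
  - intros (e & Heq & He); injection Heq as <- <-; exists e; auto.
Qed.

Lemma pairs_as_eqs (l : list (F * F)) :
  exists G : conj_eqs L X, forall p q, In (p, q) l <-> eqs_rel G p q.
Proof.
  destruct HF as (_ & _ & Hgen).
  induction l as [| [p q] l [G HG]].
  - exists []; intros p q; split; [intros [] | intros (e & [] & _)].
  - destruct (Hgen p) as [s ->], (Hgen q) as [t ->].
    exists ((s, t) :: G); intros p' q'; simpl; rewrite HG; split.
    + intros [Heq | (e & He & Hp & Hq)].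
      * injection Heq as <- <-; exists (s, t); simpl; auto.
      * exists e; simpl; auto.
    + intros (e & [<- | He] & Hp & Hq); [left; subst; reflexivity |].
      right; exists e; auto.
Qed.

Lemma compact_congruence_eqs (θ : rel F) :
  compact_congruence F θ -> exists G, rel_eq θ (Cg F (eqs_rel G)).
Proof.
  intros [l Hl]; destruct (pairs_as_eqs l) as [G HG].
  exists G; intros p q; rewrite (Hl p q); apply Cg_ext; exact HG.
Qed.

End FreeAlgebra.

Lemma disjunction_as_conjunction {L : language} (V : algebra L -> Prop)
  (HV : is_variety V) (Hcip : compact_intersection_property V) {X : Type}
  (G1 G2 : conj_eqs L X) :
  exists G0 : conj_eqs L X,
    forall e, V_implies V G0 e <-> V_implies V G1 e /\ V_implies V G2 e.
Proof.
  destruct (variety_free_algebra V HV X) as (F & g & HF).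
  destruct (compact_congruence_eqs V F g HF _
    (Hcip F (proj1 HF) _ _ (eqs_compact F g G1) (eqs_compact F g G2))) as [G0 HG0].
  exists G0; intros e.
  rewrite <- !(Cg_eqs_iff_V_implies V HV F g HF _ e); symmetry; apply HG0.
Qed.

Section FreshVariables.
Context {L : language} {X : Type}.

Fixpoint vars_below (N : nat) (t : term L (X + nat)) : Prop :=
  match t with
  | var (inl _) => True
  | var (inr k) => k < N
  | app f args => forall i, vars_below N (args i)
  end.

Lemma vars_below_mono (t : term L (X + nat)) (N N' : nat) :
  N <= N' -> vars_below N t -> vars_below N' t.
Proof.
  induction t as [[x | k] | f args IH]; simpl; intros; auto; lia.
Qed.

Lemma fin_uniform_bound (k : nat) (P : Fin.t k -> nat -> Prop) :
  (forall i N N', N <= N' -> P i N -> P i N') ->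
  (forall i, exists N, P i N) -> exists N, forall i, P i N.
Proof.
  induction k as [| k IHk]; intros Hmono Hex.
  - exists 0; intros i; exact (Fin.case0 (fun i => P i 0) i).
  - destruct (Hex Fin.F1) as [N1 HN1].
    destruct (IHk (fun i => P (Fin.FS i)) (fun i => Hmono (Fin.FS i)) (fun i => Hex (Fin.FS i)))
      as [N2 HN2].
    exists (max N1 N2); intros i; apply (Fin.caseS' i).
    + apply Hmono with N1; auto; lia.
    + intros i'; apply Hmono with N2; auto; lia.
Qed.

Lemma vars_below_exists (t : term L (X + nat)) : exists N, vars_below N t.
Proof.
  induction t as [[x | k] | f args IH].
  - exists 0; exact I.
  - exists (S k); simpl; lia.
  - apply fin_uniform_bound; auto.
    intros i N N'; apply vars_below_mono.
Qed.

Lemma conj_vars_below_exists (G : conj_eqs L (X + nat)) :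
  exists N, forall e, In e G -> vars_below N (fst e) /\ vars_below N (snd e).
Proof.
  induction G as [| e G [N HN]]; [exists 0; intros e [] |].
  destruct (vars_below_exists (fst e)) as [N1 H1], (vars_below_exists (snd e)) as [N2 H2].
  exists (max N (max N1 N2)); intros e' [<- | He].
  - split; [apply vars_below_mono with N1 | apply vars_below_mono with N2]; trivial; lia.
  - destruct (HN e' He); split; apply vars_below_mono with N; trivial; lia.
Qed.

Lemma eval_vars_below (A : algebra L) (N : nat) (a b : X + nat -> A) (t : term L (X + nat)) :
  vars_below N t ->
  (forall x, a (inl x) = b (inl x)) -> (forall k, k < N -> a (inr k) = b (inr k)) ->
  eval A a t = eval A b t.
Proof.
  intros Ht Hx Hk; induction t as [[x | k] | f args IH]; simpl in *; auto.
  f_equal; apply functional_extensionality; auto.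
Qed.

Definition shift_var {m : nat} (N : nat) (z : X + Fin.t m) : term L (X + nat) :=
  match z with
  | inl x => var (inl x)
  | inr j => var (inr (N + proj1_sig (Fin.to_nat j)))
  end.

Definition const_term (c : op L) (Hc : arity L c = 0) : term L X :=
  app c (fun i => Fin.case0 (fun _ => term L X) (eq_rect _ Fin.t i _ Hc)).

Definition const_var (c : op L) (Hc : arity L c = 0) (z : X + nat) : term L X :=
  match z with
  | inl x => var x
  | inr _ => const_term c Hc
  end.

Lemma extend_valuation {A : Type} (N m : nat) (d : A) (b : Fin.t m -> A) :
  exists f : nat -> A,
    (forall k, k < N -> f k = d) /\ forall j, f (N + proj1_sig (Fin.to_nat j)) = b j.
Proof.
  exists (fun k => if k <? N then d else
            match lt_dec (k - N) m with left H => b (Fin.of_nat_lt H) | right _ => d end).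
  split.
  - intros k Hk; apply Nat.ltb_lt in Hk as ->; reflexivity.
  - intros j; destruct (Fin.to_nat j) as [i Hi] eqn:Hj; simpl.
    replace (N + i <? N) with false by (symmetry; apply Nat.ltb_ge; lia).
    destruct (lt_dec (N + i - N) m) as [H | H]; [| lia].
    rewrite <- (Fin.of_nat_to_nat_inv j); revert H; rewrite Hj, Nat.add_comm, Nat.add_sub.
    intros H; f_equal; apply Fin.of_nat_ext.
Qed.

Lemma disj_imp_shift (V : algebra L -> Prop) (phi : conj_eqs L X) (N m : nat)
  (eps : equation L (X + Fin.t m)) :
  (forall A, V A -> forall s : X + Fin.t m -> A,
     sat_conj A (fun x => s (inl x)) phi -> sat_eq A s eps) ->
  V_implies V (map (subst_eq (fun x => var (inl x))) phi) (subst_eq (shift_var N) eps).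
Proof.
  intros H A HA a Hphi; apply sat_eq_subst, H; trivial.
  apply sat_conj_subst in Hphi; exact Hphi.
Qed.

(* The equations of G0 only involve z_k with k < N, so a valuation may send
   these to the constant and z_(N+j) to the value of y_j independently. *)
Lemma models_imp_of_shifted (V : algebra L -> Prop) (c : op L) (Hc : arity L c = 0)
  (N : nat) (G0 : conj_eqs L (X + nat))
  (HN : forall e, In e G0 -> vars_below N (fst e) /\ vars_below N (snd e))
  (m : nat) (eps : equation L (X + Fin.t m)) :
  V_implies V G0 (subst_eq (shift_var N) eps) ->
  forall A, V A -> forall s : X + Fin.t m -> A,
    sat_conj A (fun x => s (inl x)) (map (subst_eq (const_var c Hc)) G0) -> sat_eq A s eps.
Proof.
  intros Himp A HA s Hpi; apply sat_conj_subst in Hpi.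
  set (d := eval A (fun x => s (inl x)) (const_term c Hc)).
  destruct (extend_valuation N m d (fun j => s (inr j))) as (f & Hlow & Hhigh).
  set (a := fun z : X + nat => match z with inl x => s (inl x) | inr k => f k end).
  assert (Hs : s = fun z => eval A a (shift_var N z)).
  { apply functional_extensionality; intros [x | j]; simpl;
      [reflexivity | symmetry; apply Hhigh]. }
  rewrite Hs; apply sat_eq_subst, Himp; trivial.
  set (b := fun z => eval A (fun x => s (inl x)) (const_var c Hc z)).
  assert (Hab : forall t, vars_below N t -> eval A a t = eval A b t).
  { intros t Ht; apply (eval_vars_below A N);
      [exact Ht | intros x; reflexivity | intros k Hk; apply Hlow, Hk]. }
  intros e He; destruct (HN e He) as [H1 H2].
  unfold sat_eq; rewrite (Hab _ H1), (Hab _ H2); apply Hpi, He.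
Qed.

End FreshVariables.

Theorem lemma4p1 (L : language) (HL : has_constant L) (V : algebra L -> Prop)
  (HV : is_variety V) (Hcd : congruence_distributive V)
  (Hcip : compact_intersection_property V)
  (n : nat) (phi1 phi2 : conj_eqs L (Fin.t n)) :
  exists pi : conj_eqs L (Fin.t n),
    forall (m : nat) (eps : equation L (Fin.t n + Fin.t m)),
      models_disj_imp V phi1 phi2 eps <-> models_imp V pi eps.
Proof.
  destruct HL as [c Hc].
  set (embed := fun x : Fin.t n => @var L (Fin.t n + nat) (inl x)).
  destruct (disjunction_as_conjunction V HV Hcip
    (map (subst_eq embed) phi1) (map (subst_eq embed) phi2)) as [G0 HG0].
  destruct (conj_vars_below_exists G0) as [N HN].
  exists (map (subst_eq (const_var c Hc)) G0); intros m eps; split.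
  - intros Hdisj; unfold models_imp; apply (models_imp_of_shifted V c Hc N G0 HN).
    apply HG0; split; apply disj_imp_shift; intros A HA s Hphi; apply Hdisj; auto.
  - intros Hpi A HA s Hdisj; apply Hpi; [exact HA |].
    intros e He; apply in_map_iff in He as (e0 & <- & He0).
    assert (Hcons : V_implies V G0 e0) by (intros B HB b Hb; apply Hb, He0).
    apply HG0 in Hcons as [Himp1 Himp2].
    destruct Hdisj as [Hphi | Hphi];
      [apply (V_implies_instance V _ _ _ A _ Himp1) |
       apply (V_implies_instance V _ _ _ A _ Himp2)];
      trivial; apply sat_conj_subst; exact Hphi.
Qed.
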